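(* If $(A,W)$ is a Pratt comonoid such that $W$ is closed under complementation in $A$, then $W$ is closed under forming arbitrary unions, and also under forming arbitrary intersections.
   Context: A Pratt comonoid is a pair $(A,W)$ where $A$ is a set and $W$ is a set of subsets of $A$ such that (i) $\emptyset\in W$ and $A\in W$; (ii) whenever $C\subseteq A\times A$ is such that for every $a\in A$ both the $a$-th row $\{b\mid (a,b)\in C\}$ and the $a$-th column $\{b\mid (b,a)\in C\}$ belong to $W$ (a crossword over $W$), the diagonal $\{b\mid (b,b)\in C\}$ also belongs to $W$. *)

From mathcomp Require Import all_boot.
From mathcomp Require Import boolp classical_sets.
Set Implicit Arguments. Unset Strict Implicit. Unset Printing Implicit Defensive.
Local Open Scope classical_set_scope.

Definition row {A : Type} (C : set (A * A)) (a : A) : set A := [set b | C (a, b)].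
Definition col {A : Type} (C : set (A * A)) (a : A) : set A := [set b | C (b, a)].
Definition diag {A : Type} (C : set (A * A)) : set A := [set b | C (b, b)].

Definition crossword {A : Type} (W : set (set A)) (C : set (A * A)) : Prop :=
  forall a : A, W (row C a) /\ W (col C a).

Definition pratt_comonoid {A : Type} (W : set (set A)) : Prop :=
  W set0 /\ W setT /\
  (forall C : set (A * A), crossword W C -> W (diag C)).

From mathcomp Require Import all_boot.
From mathcomp Require Import boolp classical_sets.
Local Open Scope classical_set_scope.

(* The diagonal of the crossword P `*` Q is P `&` Q, so W is closed under
   binary intersections.  A pairwise disjoint family G of members of W is the
   diagonal of the crossword \bigcup_(V in G) V `*` V, whose a-th row and
   column are the block containing a (or empty), so its union lies in W.
   Given complements, take by Zorn's lemma a maximal pairwise disjoint family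
   of members of W contained in S = \bigcup_(U in F) U.  Its union Z lies in
   W; a point of S outside Z lies in some U in F, and U `&` ~` Z could then be
   added to the family.  Hence S = Z, and intersections follow by De Morgan. *)

Lemma maximal_trivIset_subfamily {T : Type} (H : set (set T)) :
  exists G : set (set T), [/\ G `<=` H, trivIset G id &
    forall V, H V -> V `&` \bigcup_(X in G) X = set0 -> G V].
Proof.
pose P := [set G : set (set T) | G `<=` H /\ trivIset G id].
have chainP GG : GG `<=` P -> total_on GG subset -> P (\bigcup_(G in GG) G).
  move=> GGP GGtot; split=> [V [G /GGP [GH _] /GH]//|X Y [G1 GG1 G1X] [G2 GG2 G2Y]].
  have [G12|G21] := GGtot _ _ GG1 GG2.
  - exact: (GGP _ GG2).2 (G12 _ G1X) G2Y.
  - exact: (GGP _ GG1).2 G1X (G21 _ G2Y).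
have [G [[GH Gtriv] Gmax]] := Zorn_bigcup chainP.
exists G; split=> // V HV VG0; apply: contrapT => GV.
apply: (Gmax (G `|` [set V])).
  by split=> [X GX|GVG]; [left|apply: GV; apply: GVG; right].
have disjV X : G X -> V `&` X = set0.
  move=> GX; apply/disjoints_subset => x Vx Xx.
  by have /disjoints_subset/(_ x Vx) := VG0; apply; exists X.
split=> [X [/GH//|->//]|X Y [GX|->] [GY|->] //= XY]; first exact: Gtriv.
- by move: XY; rewrite setIC disjV // => -[].
- by move: XY; rewrite disjV // => -[].
Qed.

Section PrattComonoid.
Variables (A : Type) (W : set (set A)).
Hypothesis prattW : pratt_comonoid W.

Lemma pratt_set0 : W set0. Proof. by case: prattW. Qed.

Lemma pratt_diag (C : set (A * A)) : crossword W C -> W (diag C).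
Proof. by case: prattW => _ [_]; apply. Qed.

Lemma pratt_guard (p : Prop) (X : set A) : W X -> W [set b | p /\ X b].
Proof.
move=> WX; have [hp|nhp] := pselect p.
- by rewrite (_ : [set b | p /\ X b] = X) //; apply/seteqP; split=> [b []|b].
- rewrite (_ : [set b | p /\ X b] = set0); first exact: pratt_set0.
  by apply/seteqP; split=> // b [].
Qed.

Lemma pratt_setI (P Q : set A) : W P -> W Q -> W (P `&` Q).
Proof.
move=> WP WQ; rewrite (_ : P `&` Q = diag (P `*` Q)) //.
apply: pratt_diag => a; split; first exact: (pratt_guard (P a) Q WQ).
rewrite (_ : col _ a = [set b | Q a /\ P b]); first exact: pratt_guard.
by apply/seteqP; split=> b [].
Qed.

Lemma pratt_bigcup_trivIset (G : set (set A)) :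
  G `<=` W -> trivIset G id -> W (\bigcup_(V in G) V).
Proof.
move=> GW Gtriv; pose C := \bigcup_(V in G) (V `*` V).
rewrite (_ : \bigcup_(V in G) V = diag C); last first.
  by apply/seteqP; split=> b [V GV Vb]; exists V => //; case: Vb.
have WrowC a : W (row C a).
  have [[V GV Va]|noV] := pselect (exists2 V, G V & V a).
  - rewrite (_ : row C a = V); first exact: GW.
    apply/seteqP; split=> [b [V' GV' [V'a V'b]]|b Vb]; last by exists V.
    by rewrite -(Gtriv _ _ GV' GV) //; exists a.
  - rewrite (_ : row C a = set0); first exact: pratt_set0.
    by apply/seteqP; split=> // b [V GV [Va _]]; apply: noV; exists V.
apply: pratt_diag => a; split=> //; rewrite (_ : col C a = row C a) //.
by apply/seteqP; split=> b [V GV [? ?]]; exists V.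
Qed.

Hypothesis complW : forall U : set A, W U -> W (~` U).

Lemma pratt_bigcup (F : set (set A)) : F `<=` W -> W (\bigcup_(U in F) U).
Proof.
move=> FW; set S := \bigcup_(U in F) U.
have [G [GH Gtriv Gmax]] :=
  maximal_trivIset_subfamily [set V | W V /\ V `<=` S].
set Z := \bigcup_(V in G) V.
have WZ : W Z by apply: pratt_bigcup_trivIset => // V /GH[].
suff -> : S = Z by [].
apply/seteqP; split=> [x Sx|x [V /GH[_ VS] /VS]//]; apply: contrapT => Zx.
have [U FU Ux] := Sx.
have GUZ : G (U `&` ~` Z).
  apply: Gmax; first by split=> [|y [Uy _]]; [exact/pratt_setI/complW/WZ/FW|exists U].
  by rewrite -setIA setICl setI0.
by apply: (Zx); exists (U `&` ~` Z).
Qed.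

Lemma pratt_bigcap (F : set (set A)) : F `<=` W -> W (\bigcap_(U in F) U).
Proof.
move=> FW; rewrite -[X in W X]setCK setC_bigcap -(bigcup_image F setC id).
by apply: complW; apply: pratt_bigcup => _ [U FU <-]; exact/complW/FW.
Qed.

End PrattComonoid.

Theorem corollary4p3 (A : Type) (W : set (set A)) :
  pratt_comonoid W ->
  (forall U : set A, W U -> W (~` U)) ->
  (forall F : set (set A), F `<=` W -> W (\bigcup_(U in F) U)) /\
  (forall F : set (set A), F `<=` W -> W (\bigcap_(U in F) U)).
Proof.
move=> prattW complW; split=> F FW.
- exact: pratt_bigcup.
- exact: pratt_bigcap.
Qed.
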